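(* Let $(\mathcal S,\mathcal A,P,R,d_0)$ be a finite episodic MDP with horizon $T$ and $\pi_\theta$ a parameterized policy as described in the context. Let $\theta_0\in\mathbb R^n$ and let $(\theta_i)$ be generated by $$\theta_{i+1}=\theta_i+\alpha_i\,\hat\nabla(\theta_i,\gamma_i),$$ where for all $i$ the step size $\alpha_i>0$, the discount factor $\gamma_i\in[0,1]$, and $$\sum_{i=0}^\infty\alpha_i=\infty,\qquad\sum_{i=0}^\infty\alpha_i^2<\infty,\qquad \alpha_i\ge c(1-\gamma_i)$$ for some constant $c>0$. Then $J(\theta_i)$ converges to a finite value and $\lim_{i\to\infty}\nabla J(\theta_i)=0$. Furthermore, every limit point of $(\theta_i)$ is a stationary point of $J$.
   Context: Setting: $\mathcal S$ is a finite set of states, $\mathcal A$ a finite set of actions, $P(s'\mid s,a)$ a transition function, $R(\cdot\mid s,a,s')$ a reward distribution supported in $[-R_{\max},R_{\max}]$, and $d_0$ an initial state distribution. There is a terminal absorbing state in which the agent stays and receives reward $0$. An episode: $S_0\sim d_0$; at each time $t$, $A_t\sim\pi_\theta(\cdot\mid S_t)$, $S_{t+1}\sim P(\cdot\mid S_t,A_t)$, $R_t\sim R(\cdot\mid S_t,A_t,S_{t+1})$; the horizon $T$ is fixed and $S_T$ is terminal. The policy $\pi_\theta(a\mid s)$ is positive and differentiable in $\theta\in\mathbb R^n$, there is a constant $L_\pi$ with $\big\|\frac{\partial}{\partial\theta}\ln\pi_\theta(a\mid s)\big\|\le L_\pi$ for all $\theta,s,a$, and the parameterization is such that $J$ is continuously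 differentiable on $\mathbb R^n$ with Lipschitz continuous gradient. Expectations are under $\pi=\pi_\theta$. Objective: $J(\theta)=\mathbb E\big[\sum_{t=0}^{T-1}R_t\big]$. For $\gamma\in[0,1]$ (with $0^0=1$), the discounted action-value function is $Q^{\pi_\theta}_\gamma(s,a)=\mathbb E\big[\sum_{i=t}^{T}\gamma^{i-t}R_i\,\big|\,S_t=s,A_t=a\big]$ (treated as a function of $(s,a)$ only, i.e. not depending on $t$, e.g. because time is encoded in the state). The discounted approximation of the policy gradient is $$\hat\nabla(\theta,\gamma)=\mathbb E\Big[\sum_{t=0}^{T-1}Q^{\pi_\theta}_\gamma(S_t,A_t)\,\frac{\partial}{\partial\theta}\ln\pi_\theta(A_t\mid S_t)\Big].$$ *)

From HB Require Import structures.
From mathcomp Require Import all_boot all_order all_algebra.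
From mathcomp Require Import all_classical all_reals all_analysis.
Set Implicit Arguments. Unset Strict Implicit. Unset Printing Implicit Defensive.
Import Order.TTheory GRing.Theory Num.Theory.
Import numFieldNormedType.Exports.
Local Open Scope ring_scope.

Section PG.
Variables (R : realType) (S A : finType) (n T : nat).

Definition grad (f : 'rV[R]_n -> R) (x : 'rV[R]_n) : 'rV[R]_n :=
  \row_(j < n) 'D_(delta_mx 0 j) f x.

Variables (P : S -> A -> S -> R)
          (r : S -> A -> S -> R)      (* mean reward E[R | s,a,s'] *)
          (d0 : S -> R)
          (pi : 'rV[R]_n -> S -> A -> R).

Fixpoint state_dist (th : 'rV[R]_n) (t : nat) (s : S) : R :=
  match t with
  | 0 => d0 s
  | t'.+1 => \sum_(s0 : S) \sum_(a0 : A)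
               state_dist th t' s0 * pi th s0 a0 * P s0 a0 s
  end.

(* Qsteps k th g s a = E[ sum_{j=0}^{k-1} g^j R_{t+j} | S_t = s, A_t = a ] *)
Fixpoint Qsteps (k : nat) (th : 'rV[R]_n) (g : R) (s : S) (a : A) : R :=
  match k with
  | 0 => 0
  | k'.+1 => \sum_(s' : S) P s a s' *
               (r s a s' + g * \sum_(a' : A) pi th s' a' * Qsteps k' th g s' a')
  end.

(* Q^{pi_theta}_gamma(s,a) at time t: E[ sum_{i=t}^{T} g^(i-t) R_i | S_t=s, A_t=a ] *)
Definition Qgamma (th : 'rV[R]_n) (g : R) (t : nat) (s : S) (a : A) : R :=
  Qsteps (T - t).+1 th g s a.

Definition Jobj (th : 'rV[R]_n) : R :=
  \sum_(t < T) \sum_(s : S) \sum_(a : A) \sum_(s' : S)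
     state_dist th t s * pi th s a * P s a s' * r s a s'.

Definition gradhat (th : 'rV[R]_n) (g : R) : 'rV[R]_n :=
  \sum_(t < T) \sum_(s : S) \sum_(a : A)
     (state_dist th t s * pi th s a * Qgamma th g t s a)
       *: grad (fun th' => ln (pi th' s a)) th.

End PG.

From HB Require Import structures.
From mathcomp Require Import all_boot all_order all_algebra.
From mathcomp Require Import all_classical all_reals all_analysis.
From mathcomp Require Import ring lra.
Import Order.TTheory GRing.Theory Num.Theory.
Import numFieldNormedType.Exports.
Local Open Scope ring_scope.
Local Open Scope classical_set_scope.
Set Implicit Arguments. Unset Strict Implicit. Unset Printing Implicit Defensive.

(* By the policy-gradient theorem, [grad J] is the undiscounted estimator
   [gradhat th 1], and discounting moves each Q-value by at most
   O(1 - gamma); with alpha_i >= c (1 - gamma_i) the iteration is thus a gradient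
   ascent whose direction has bias O(alpha_i).  The Lipschitz gradient gives
   J(theta_{i+1}) >= J(theta_i) + alpha_i |grad J(theta_i)|^2 - K alpha_i^2, so the
   bounded J(theta_i) converges and sum_i alpha_i |grad J(theta_i)|^2 is finite.
   Since |grad J(theta_i)|^2 grows by at most O(alpha_i) per step, its square has
   summable increments, so it converges, and the divergence of sum_i alpha_i forces
   the limit to be 0.  Continuity of [grad J] carries this to limit points. *)

Section ClusterLimit.
Variables (T U : topologicalType).

Lemma cluster_map_continuous (F : set_system T) (f : T -> U) x :
  {for x, continuous f} -> cluster F x -> cluster (f @ F) (f x).
Proof.
move=> cf Fx A B FA /cf fB.
by have [y [Ay By]] := Fx _ _ FA fB; exists (f y).
Qed.

Lemma cluster_cvg_eq (F : set_system U) l y : hausdorff_space U ->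
  F --> l -> cluster F y -> y = l.
Proof. by move=> sepU Fl /(cvg_cluster Fl) /sepU. Qed.

End ClusterLimit.

Section RealSequences.
Variable R : realType.
Implicit Types (u w q a : nat -> R).

Lemma series_le_limn a : (forall i, 0 <= a i) -> cvgn [series a i]_i ->
  forall N, \sum_(i < N) a i <= limn [series a i]_i.
Proof.
move=> a0 ca N; rewrite -(big_mkord xpredT).
apply: (nondecreasing_cvgn_le _ ca N) => {N}.
by apply/nondecreasing_seqP => k; rewrite /series /= big_nat_recr //= lerDl.
Qed.

(* Robbins--Siegmund in its deterministic form: [u - \sum w] is nonincreasing. *)
Lemma cvgn_quasi_nonincreasing u w (m Bw : R) :
  (forall i, m <= u i) -> (forall i, 0 <= w i) ->
  (forall N, \sum_(i < N) w i <= Bw) ->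
  (forall i, u i.+1 <= u i + w i) -> cvgn u.
Proof.
move=> um w0 wB uw.
pose s N := \sum_(i < N) w i.
have -> : u = (fun N => u N - s N) + s by apply/funext => N; rewrite /= subrK.
apply: is_cvgD.
  apply: nonincreasing_is_cvgn.
    by apply/nonincreasing_seqP => N; rewrite /s big_ord_recr /=; have := uw N; lra.
  by exists (m - Bw) => _ [N _ <-]; have := um N; have := wB N; rewrite /s /=; lra.
apply: nondecreasing_is_cvgn.
  by apply/nondecreasing_seqP => N; rewrite /s big_ord_recr /= lerDl.
by exists Bw => _ [N _ <-]; exact: wB.
Qed.

(* Squaring turns the increments [c a_i] into the summable [2 c a_i q_i + c^2 a_i^2]. *)
Lemma cvgn_slowly_increasing q a (c Cq Ca : R) :
  (forall i, 0 <= q i) -> (forall i, 0 < a i) -> 0 <= c ->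
  (forall N, \sum_(i < N) a i * q i <= Cq) ->
  (forall N, \sum_(i < N) a i ^+ 2 <= Ca) ->
  (forall i, q i.+1 <= q i + c * a i) -> cvgn q.
Proof.
move=> q0 a0 c0 qC aC qa.
have cq2 : cvgn (fun i => q i ^+ 2).
  apply: (@cvgn_quasi_nonincreasing _ (fun i => 2 * c * (a i * q i) + c ^+ 2 * a i ^+ 2)
    0 (2 * c * Cq + c ^+ 2 * Ca)).
  - by move=> i; exact: sqr_ge0.
  - move=> i; apply: addr_ge0; last by apply: mulr_ge0; exact: sqr_ge0.
    by apply: mulr_ge0; [lra | apply: mulr_ge0; [exact: ltW | exact: q0]].
  - move=> N; rewrite big_split /= -!mulr_sumr.
    by apply: lerD; apply: ler_wpM2l; rewrite ?sqr_ge0 ?mulr_ge0 // ?qC ?aC.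
  - move=> i; have := qa i; have := q0 i; have := q0 i.+1; have := a0 i; nra.
have -> : q = Num.sqrt \o (fun i => q i ^+ 2).
  by apply/funext => i /=; rewrite sqrtr_sqr ger0_norm.
move/cvg_ex: cq2 => [l ql]; apply/cvg_ex; exists (Num.sqrt l).
by apply: continuous_cvg ql; exact: sqrt_continuous.
Qed.

Lemma lim_eq0_weighted_sum_bounded q a (l C : R) :
  (forall i, 0 <= q i) -> (forall i, 0 < a i) -> [series a i]_i @ \oo --> +oo ->
  (forall N, \sum_(i < N) a i * q i <= C) -> q @ \oo --> l -> l = 0.
Proof.
move=> q0 a0 adiv qC ql.
have l0 : 0 <= l by rewrite -(cvg_lim _ ql) //; apply: limr_ge; [exact: cvgP ql | exact: nearW].
apply/eqP; rewrite eq_le l0 andbT leNgt; apply/negP => lpos.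
have [N0 _ qN0] := cvgr_gt l ql (l / 2) ltac:(lra).
have [N1 _ aN1] := proj1 (cvgryPge _) adiv ([series a i]_i N0 + 2 * C / l + 1).
pose N := maxn N0 N1.
have tail : l / 2 * ([series a i]_i N - [series a i]_i N0) <= C.
  apply: le_trans (qC N); rewrite -(big_mkord xpredT (fun i => a i * q i)).
  rewrite (@big_cat_nat _ _ _ N0 0 N _ _ (leq0n N0) (leq_maxl N0 N1)) /= -[leLHS]add0r.
  apply: lerD; first by apply: sumr_ge0 => i _; apply: mulr_ge0; [exact: ltW | exact: q0].
  rewrite /series /= (@big_cat_nat _ _ _ N0 0 N _ _ (leq0n N0) (leq_maxl N0 N1)) /=.
  rewrite addrAC subrr add0r mulr_sumr; apply: ler_sum_nat => i /andP[iN0 _].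
  by rewrite mulrC ler_wpM2l ?(ltW (a0 i)) // ltW // qN0.
have far := aN1 N (leq_maxr _ _).
have : l / 2 * (2 * C / l + 1) <= C by apply: le_trans tail; apply: ler_wpM2l; lra.
have -> : l / 2 * (2 * C / l + 1) = C + l / 2 by field; lra.
lra.
Qed.

End RealSequences.

Section RowVectors.
Variables (R : realType) (n : nat).
Implicit Types u v w : 'rV[R]_n.

Lemma row_entry_le_norm v j : `|v ord0 j| <= `|v|.
Proof.
rewrite [leRHS]/Num.norm /= mx_normrE.
exact: (@le_bigmax_cond _ _ _ _ (ord0, j)).
Qed.

Definition dotr u v := \sum_(j < n) u ord0 j * v ord0 j.

Lemma dotrDl u w v : dotr (u + w) v = dotr u v + dotr w v.
Proof. by rewrite /dotr -big_split; apply: eq_bigr => j _; rewrite !mxE mulrDl. Qed.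

Lemma dotrBr u v w : dotr u (v - w) = dotr u v - dotr u w.
Proof. by rewrite /dotr -sumrB; apply: eq_bigr => j _; rewrite !mxE mulrBr. Qed.

Lemma dotrZl (k : R) u v : dotr (k *: u) v = k * dotr u v.
Proof. by rewrite /dotr mulr_sumr; apply: eq_bigr => j _; rewrite !mxE mulrA. Qed.

(* The norm of ['rV_n] is the sup norm, whence the factor [n]. *)
Lemma dotr_le u v : `|dotr u v| <= n%:R * (`|u| * `|v|).
Proof.
apply: le_trans (ler_norm_sum _ _ _) _.
rewrite mulr_natl -[n in _ *+ n]card_ord -sumr_const; apply: ler_sum => j _.
by rewrite normrM ler_pM ?row_entry_le_norm.
Qed.

Lemma dotr_ge_sqr_entry v j : v ord0 j ^+ 2 <= dotr v v.
Proof.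
by rewrite /dotr (bigD1 j) //= -expr2 lerDl sumr_ge0 // => k _; rewrite -expr2 sqr_ge0.
Qed.

Lemma sqr_norm_le_dotr v : `|v| ^+ 2 <= dotr v v.
Proof.
have [->|/mx_norm_neq0 [[i j] /= vij]] := eqVneq `|v| 0.
  by rewrite expr0n /= sumr_ge0 // => j _; rewrite -expr2 sqr_ge0.
by rewrite [`|v|]vij (ord1 i) real_normK ?num_real // dotr_ge_sqr_entry.
Qed.

End RowVectors.

Section LipschitzGradient.
Variables (R : realType) (n : nat) (J : 'rV[R]_n -> R) (L : R).
Hypotheses (dJ : forall x, differentiable J x) (L0 : 0 <= L)
  (HL : forall x y, `|grad J x - grad J y| <= L * `|x - y|).
Implicit Types (x v : 'rV[R]_n) (t : R).

Lemma derive_grad x v : 'D_v J x = dotr v (grad J x).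
Proof.
rewrite deriveE // {1}(row_sum_delta v) linear_sum; apply: eq_bigr => j _.
by rewrite linearZ /= mxE deriveE.
Qed.

Lemma is_derive_line x v t :
  is_derive t 1 (fun s => J (x + s *: v)) ('D_v J (x + t *: v)).
Proof.
have line_quotE : (fun h : R => h^-1 *: (((fun s => J (x + s *: v)) \o shift t) (h *: 1)
    - J (x + t *: v))) =
  (fun h : R => h^-1 *: ((J \o shift (x + t *: v)) (h *: v) - J (x + t *: v))).
  by apply/funext => h /=; rewrite /shift /= [h *: 1]mulr1 scalerDl addrCA.
have dJx : derivable J (x + t *: v) v by exact: diff_derivable.
by split; rewrite /derivable /derive line_quotE.
Qed.

Lemma lipschitz_grad_ascent x v :
  J x + dotr v (grad J x) - n%:R * L * `|v| ^+ 2 <= J (x + v).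
Proof.
have [xi xi01 mvt] := @MVT R (fun s => J (x + s *: v)) (fun s => 'D_v J (x + s *: v))
  0 1 ltr01 (fun t _ => is_derive_line x v t)
  (derivable_within_continuous (fun t _ => @ex_derive _ _ _ _ _ _ _ (is_derive_line x v t))).
move: mvt; rewrite scale1r scale0r addr0 subr0 mulr1 => mvt.
have -> : J (x + v) = J x + 'D_v J (x + xi *: v) by rewrite -mvt; ring.
rewrite -addrA lerD2l derive_grad lerBlDr -lerBlDl -dotrBr.
have /andP[/ltW xi0 /ltW xi1] : 0 < xi < 1 by move: xi01; rewrite in_itv.
have grad_gap : `|grad J x - grad J (x + xi *: v)| <= L * `|v|.
  apply: le_trans (HL _ _) _; rewrite opprD addrA subrr sub0r normrN normrZ ger0_norm //.
  by rewrite ler_wpM2l // ler_piMl.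
apply: le_trans (ler_norm _) _; apply: le_trans (dotr_le _ _) _.
by rewrite -mulrA ler_wpM2l // expr2 mulrCA ler_wpM2l.
Qed.

End LipschitzGradient.

Section BiasedGradientAscent.
Variables (R : realType) (n : nat) (J : 'rV[R]_n -> R) (L M G B : R).
Variables (alpha : nat -> R) (theta d : nat -> 'rV[R]_n).
Hypotheses (dJ : forall x, differentiable J x) (L0 : 0 <= L)
  (HL : forall x y, `|grad J x - grad J y| <= L * `|x - y|)
  (J_bounded : forall x, `|J x| <= M)
  (grad_bounded : forall x, `|grad J x| <= G)
  (d_bounded : forall i, `|d i| <= G)
  (d_bias : forall i, `|d i - grad J (theta i)| <= B * alpha i)
  (theta_step : forall i, theta i.+1 = theta i + alpha i *: d i)
  (alpha_gt0 : forall i, 0 < alpha i)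
  (alpha_series : [series alpha i]_i @ \oo --> +oo)
  (alpha_sqr_series : cvgn [series alpha i ^+ 2]_i).

Local Notation g i := (grad J (theta i)).
Local Notation sqg i := (dotr (g i) (g i)).

Let G0 : 0 <= G. Proof. exact: le_trans (grad_bounded 0). Qed.

Let B0 : 0 <= B.
Proof. by have := le_trans (normr_ge0 _) (d_bias 0); rewrite pmulr_lge0. Qed.

Let sqg_ge0 i : 0 <= sqg i.
Proof. by apply: sumr_ge0 => j _; rewrite -expr2 sqr_ge0. Qed.

Let K := n%:R * (G * B + L * G ^+ 2).

Lemma ascent_step i : J (theta i) + alpha i * sqg i - K * alpha i ^+ 2 <= J (theta i.+1).
Proof.
have := lipschitz_grad_ascent dJ L0 HL (theta i) (alpha i *: d i); rewrite -theta_step.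
apply: le_trans; rewrite dotrZl.
have -> : dotr (d i) (g i) = dotr (d i - g i) (g i) + sqg i by rewrite -dotrDl subrK.
have a0 := ltW (alpha_gt0 i).
have bias_term : `|dotr (d i - g i) (g i)| <= n%:R * (B * alpha i * G).
  apply: le_trans (dotr_le _ _) _.
  by rewrite ler_wpM2l // ler_pM ?mulr_ge0.
have step_norm : `|alpha i *: d i| ^+ 2 <= alpha i ^+ 2 * G ^+ 2.
  by rewrite normrZ ger0_norm // exprMn ler_wpM2l ?sqr_ge0 // lerXn2r ?nnegrE.
move: bias_term; rewrite ler_norml => /andP[bias_lb _].
have bias_step := ler_wpM2l a0 bias_lb.
have norm_step : n%:R * L * `|alpha i *: d i| ^+ 2 <= n%:R * L * (alpha i ^+ 2 * G ^+ 2).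
  by rewrite ler_wpM2l ?mulr_ge0.
have -> : K * alpha i ^+ 2 =
    alpha i * (n%:R * (B * alpha i * G)) + n%:R * L * (alpha i ^+ 2 * G ^+ 2).
  by rewrite /K; ring.
move: bias_step norm_step; rewrite mulrDr mulrN; lra.
Qed.

Let K0 : 0 <= K. Proof. by rewrite mulr_ge0 // addr_ge0 ?mulr_ge0 ?sqr_ge0. Qed.

Let alpha_sqr_sum_le N : \sum_(i < N) alpha i ^+ 2 <= limn [series alpha i ^+ 2]_i.
Proof. by apply: series_le_limn => // i; exact: sqr_ge0. Qed.

Lemma weighted_sqg_sum_le N :
  \sum_(i < N) alpha i * sqg i <= 2 * M + K * limn [series alpha i ^+ 2]_i.
Proof.
have telescoped : \sum_(i < N) alpha i * sqg i <=
    J (theta N) - J (theta 0) + K * \sum_(i < N) alpha i ^+ 2.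
  elim: N => [|N IH]; first by rewrite !big_ord0 subrr mulr0 addr0.
  by rewrite !big_ord_recr /= mulrDr; have := ascent_step N; lra.
apply: le_trans telescoped _.
have := ler_wpM2l K0 (alpha_sqr_sum_le N).
have := J_bounded (theta N); have := J_bounded (theta 0).
rewrite !ler_norml => /andP[? ?] /andP[? ?]; lra.
Qed.

Lemma cvgn_objective : cvgn (fun i => J (theta i)).
Proof.
rewrite -is_cvgNE.
apply: (@cvgn_quasi_nonincreasing _ _ (fun i => K * alpha i ^+ 2) (- M)
  (K * limn [series alpha i ^+ 2]_i)) => [i|i|N|i] /=.
- by rewrite fctE lerN2; have := J_bounded (theta i); rewrite ler_norml => /andP[].
- by rewrite mulr_ge0 ?sqr_ge0.
- by rewrite -mulr_sumr ler_wpM2l // alpha_sqr_sum_le.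
- have := ascent_step i; have := mulr_ge0 (ltW (alpha_gt0 i)) (sqg_ge0 i); rewrite !fctE; lra.
Qed.

Let C := n%:R * (2 * G * (L * G)).

Lemma sqg_step i : sqg i.+1 <= sqg i + C * alpha i.
Proof.
have grad_gap : `|g i.+1 - g i| <= L * G * alpha i.
  apply: le_trans (HL _ _) _; rewrite theta_step addrAC subrr add0r normrZ.
  by rewrite gtr0_norm // -mulrA ler_wpM2l // mulrC ler_wpM2r // ltW.
have grad_sum : `|g i.+1 + g i| <= 2 * G.
  by apply: le_trans (ler_normD _ _) _; rewrite mulr2n mulrDl mul1r lerD.
have -> : sqg i.+1 = sqg i + dotr (g i.+1 - g i) (g i.+1 + g i).
  by rewrite /dotr -big_split; apply: eq_bigr => j _; rewrite /= !mxE; ring.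
rewrite lerD2l; apply: le_trans (ler_norm _) _; apply: le_trans (dotr_le _ _) _.
have -> : C * alpha i = n%:R * (L * G * alpha i * (2 * G)) by rewrite /C; ring.
by rewrite ler_wpM2l // ler_pM.
Qed.

Lemma cvg_grad0 : g i @[i --> \oo] --> (0 : 'rV[R]_n).
Proof.
have C0 : 0 <= C by rewrite !mulr_ge0.
have sqg_cvg : cvgn (fun i => sqg i).
  exact: cvgn_slowly_increasing sqg_ge0 alpha_gt0 C0 weighted_sqg_sum_le
    alpha_sqr_sum_le sqg_step.
have sqg0 : (fun i => sqg i) @ \oo --> 0.
  by rewrite -(lim_eq0_weighted_sum_bounded sqg_ge0 alpha_gt0 alpha_series
    weighted_sqg_sum_le sqg_cvg).
apply/cvgrPdist_lt => e e0; near=> i; rewrite sub0r normrN.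
have : sqg i < e ^+ 2 by near: i; exact: cvgr_lt sqg0 _ (exprn_gt0 2 e0).
have := sqr_norm_le_dotr (g i); have := normr_ge0 (g i); nra.
Unshelve. all: by end_near.
Qed.

End BiasedGradientAscent.

Section DirectionalDerivatives.
Variables (R : realType) (n : nat).
Implicit Types (f h : 'rV[R]_n -> R) (x v : 'rV[R]_n).

Lemma is_derive_sum_fin (I : finType) (F : I -> 'rV[R]_n -> R) x v (dF : I -> R) :
  (forall i, is_derive x v (F i) (dF i)) ->
  is_derive x v (fun y => \sum_i F i y) (\sum_i dF i).
Proof.
move=> dFi; have -> : (fun y => \sum_i F i y) = \sum_i F i.
  by apply/funext => y; rewrite fct_sumE.
by elim/big_ind2 : _ => // [|? ? ? ? ? ?]; [exact: is_derive_cst | exact: is_deriveD].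
Qed.

Lemma is_derive_mul f h x v df dh : is_derive x v f df -> is_derive x v h dh ->
  is_derive x v (fun y => f y * h y) (df * h x + f x * dh).
Proof. by move=> dfx dhx; rewrite addrC [df * _]mulrC; exact: is_deriveM. Qed.

Lemma is_derive_scale (k : R) f x v df : is_derive x v f df ->
  is_derive x v (fun y => k * f y) (k * df).
Proof. exact: is_deriveZ. Qed.

Lemma grad_ln f x j : differentiable f x -> 0 < f x ->
  grad (fun y => ln (f y)) x ord0 j = 'D_(delta_mx 0 j) f x / f x.
Proof.
move=> df fx0; rewrite mxE.
have dln : differentiable (@ln R) (f x).
  by apply/derivable1_diffP; exact: (@ex_derive _ _ _ _ _ _ _ (is_derive1_ln fx0)).
rewrite (_ : (fun y => ln (f y)) = (@ln R) \o f) // deriveE; last exact: differentiable_comp.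
rewrite diff_comp // /= deriv1E; last exact/derivable1_diffP.
by rewrite derive1E (@derive_val _ _ _ _ _ _ _ (is_derive1_ln fx0)) -deriveE.
Qed.

End DirectionalDerivatives.

Lemma norm_convex_comb_le (R : realType) (I : finType) (w X : I -> R) c :
  (forall i, 0 <= w i) -> \sum_i w i = 1 -> (forall i, `|X i| <= c) ->
  `|\sum_i w i * X i| <= c.
Proof.
move=> w0 w1 Xc; apply: le_trans (ler_norm_sum _ _ _) _.
rewrite -[leRHS]mul1r -w1 mulr_suml; apply: ler_sum => i _.
by rewrite normrM ger0_norm // ler_wpM2l.
Qed.

Section EpisodicMDP.
Variables (R : realType) (S A : finType) (n T : nat).
Variables (P r : S -> A -> S -> R) (d0 : S -> R) (pi : 'rV[R]_n -> S -> A -> R).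
Hypotheses (P_ge0 : forall s a s', 0 <= P s a s')
  (P_sum1 : forall s a, \sum_(s' : S) P s a s' = 1)
  (d0_ge0 : forall s, 0 <= d0 s) (d0_sum1 : \sum_(s : S) d0 s = 1)
  (pi_gt0 : forall th s a, 0 < pi th s a)
  (pi_sum1 : forall th s, \sum_(a : A) pi th s a = 1).

Local Notation mu th t s := (state_dist P d0 pi th t s).
Local Notation Q k th g s a := (Qsteps P r pi k th g s a).

Lemma state_dist_ge0 th t s : 0 <= mu th t s.
Proof.
elim: t s => [|t IH] s /=; first exact: d0_ge0.
by do 2![apply: sumr_ge0 => ? _]; rewrite !mulr_ge0 ?IH ?P_ge0 ?ltW.
Qed.

Lemma state_dist_step th (Y : S -> R) t :
  \sum_(s : S) mu th t s * (\sum_(a : A) pi th s a * \sum_(s' : S) P s a s' * Y s') =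
  \sum_(s' : S) mu th t.+1 s' * Y s'.
Proof.
under eq_bigr do rewrite mulr_sumr; under eq_bigr do under eq_bigr do
  rewrite mulr_sumr mulr_sumr.
under [RHS]eq_bigr do rewrite /= mulr_suml; under [RHS]eq_bigr do
  under eq_bigr do rewrite mulr_suml.
rewrite [RHS]exchange_big; apply: eq_bigr => s _; rewrite [RHS]exchange_big.
by do 2![apply: eq_bigr => ? _]; rewrite !mulrA.
Qed.

Lemma state_dist_sum1 th t : \sum_(s : S) mu th t s = 1.
Proof.
elim: t => [|t IH] //; rewrite -[LHS](eq_bigr _ (fun s _ => mulr1 _)).
rewrite -state_dist_step -[RHS]IH; apply: eq_bigr => s _.
under eq_bigr do rewrite (eq_bigr _ (fun s' _ => mulr1 _)) P_sum1 mulr1.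
by rewrite pi_sum1 mulr1.
Qed.

Lemma state_dist_telescope th (X : nat -> S -> R) (f : nat -> S -> A -> R) :
  (forall k s, X k.+1 s =
     \sum_(a : A) (f k s a + pi th s a * \sum_(s' : S) P s a s' * X k s')) ->
  forall j t, \sum_(s : S) mu th t s * X j s =
    \sum_(i < j) \sum_(s : S) mu th (t + i)%N s * \sum_(a : A) f (j - i.+1)%N s a
    + \sum_(s : S) mu th (t + j)%N s * X 0%N s.
Proof.
move=> X_succ; elim=> [|j IH] t; first by rewrite big_ord0 add0r addn0.
have -> : \sum_(s : S) mu th t s * X j.+1 s = \sum_(s : S) mu th t s * \sum_(a : A) f j s a
    + \sum_(s : S) mu th t.+1 s * X j s.
  rewrite -state_dist_step -big_split /=; apply: eq_bigr => s _.
  by rewrite X_succ big_split /= mulrDr.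
rewrite IH big_ord_recl addn0 subSS subn0 addrA addSnnS.
by congr (_ + _ + _); apply: eq_bigr => i _; rewrite lift0 addSnnS subSS.
Qed.

Definition mean_reward s a := \sum_(s' : S) P s a s' * r s a s'.

Definition value k th s := \sum_(a : A) pi th s a * Q k th 1 s a.

Lemma value0 th s : value 0 th s = 0.
Proof. by rewrite /value big1 // => a _; rewrite mulr0. Qed.

Lemma value_succ th k s : value k.+1 th s =
  \sum_(a : A) (pi th s a * mean_reward s a +
                 pi th s a * \sum_(s' : S) P s a s' * value k th s').
Proof.
apply: eq_bigr => a _; rewrite -mulrDr /mean_reward -big_split /=.
by congr (_ * _); apply: eq_bigr => s' _; rewrite mul1r mulrDr.
Qed.

Variable sterm : S.
Hypotheses (P_term : forall a, P sterm a sterm = 1)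
  (r_term : forall a, r sterm a sterm = 0)
  (state_dist_T : forall th, mu th T sterm = 1).

Lemma mean_reward_term a : mean_reward sterm a = 0.
Proof.
have P_term_other : \sum_(s' | s' != sterm) P sterm a s' = 0.
  by have := P_sum1 sterm a; rewrite (bigD1 sterm) //= P_term; lra.
rewrite /mean_reward (bigD1 sterm) //= r_term mulr0 add0r big1 // => s' s'_other.
by rewrite (psumr_eq0P (fun s _ => P_ge0 _ _ s) P_term_other) ?mul0r.
Qed.

Lemma sum_state_dist_T th (F : S -> R) : \sum_(s : S) mu th T s * F s = F sterm.
Proof.
have mu_T_other : \sum_(s | s != sterm) mu th T s = 0.
  by have := state_dist_sum1 th T; rewrite (bigD1 sterm) //= state_dist_T; lra.
rewrite (bigD1 sterm) //= state_dist_T mul1r big1 ?addr0 // => s s_other.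
by rewrite (psumr_eq0P (fun s _ => state_dist_ge0 th T s) mu_T_other) ?mul0r.
Qed.

(* [value T.+1] also counts the reward at time [T], which vanishes in [sterm]. *)
Lemma Jobj_value th : Jobj T P r d0 pi th = \sum_(s : S) d0 s * value T.+1 th s.
Proof.
rewrite (state_dist_telescope (f := fun _ s a => pi th s a * mean_reward s a)
  (fun k s => value_succ th k s) T.+1 0).
rewrite [X in _ + X]big1 => [|s _]; last by rewrite value0 mulr0.
rewrite addr0 big_ord_recr /= add0n sum_state_dist_T.
rewrite [X in _ + X]big1 => [|a _]; last by rewrite mean_reward_term mulr0.
rewrite addr0; apply: eq_bigr => t _; rewrite add0n; apply: eq_bigr => s _.
rewrite mulr_sumr; apply: eq_bigr => a _; rewrite /mean_reward !mulr_sumr.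
by apply: eq_bigr => s' _; rewrite !mulrA.
Qed.

Variable Rmax : R.
Hypotheses (r_bounded : forall s a s', `|r s a s'| <= Rmax) (Rmax_ge0 : 0 <= Rmax).

Lemma Qsteps_bound th g k s a : 0 <= g <= 1 -> `|Q k th g s a| <= k%:R * Rmax.
Proof.
move=> /andP[g0 g1]; elim: k s a => [|k IH] s a /=; first by rewrite normr0 mul0r.
apply: norm_convex_comb_le => // s'; apply: le_trans (ler_normD _ _) _.
rewrite -natr1 mulrDl mul1r addrC lerD // normrM (ger0_norm g0) -[leRHS]mul1r.
by rewrite ler_pM // norm_convex_comb_le // => a'; exact: ltW.
Qed.

Lemma Qsteps_discount_gap th g k s a : 0 <= g <= 1 ->
  `|Q k th 1 s a - Q k th g s a| <= k%:R ^+ 2 * Rmax * (1 - g).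
Proof.
move=> g01; have /andP[g0 g1] := g01.
elim: k s a => [|k IH] s a; first by rewrite subrr normr0 expr2 !mul0r.
have -> : Q k.+1 th 1 s a - Q k.+1 th g s a = \sum_(s' : S) P s a s' *
    \sum_(a' : A) pi th s' a' * ((Q k th 1 s' a' - Q k th g s' a') + (1 - g) * Q k th g s' a').
  rewrite /= -sumrB; apply: eq_bigr => s' _; rewrite -mulrBr mul1r; congr (_ * _).
  rewrite mulr_sumr opprD addrACA subrr add0r -sumrB; apply: eq_bigr => a' _ /=; ring.
apply: norm_convex_comb_le => // s'; apply: norm_convex_comb_le => // [a'|a'].
  exact: ltW.
have discount_term : `|(1 - g) * Q k th g s' a'| <= (1 - g) * (k%:R * Rmax).
  by rewrite normrM ger0_norm ?subr_ge0 // ler_wpM2l ?subr_ge0 // Qsteps_bound.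
apply: le_trans (ler_normD _ _) _; apply: le_trans (lerD (IH s' a') discount_term) _.
have : 0 <= Rmax * (1 - g) by rewrite mulr_ge0 ?subr_ge0.
rewrite -natr1; have : 0 <= k%:R :> R by [].
set x := k%:R; set y := 1 - g; nra.
Qed.

Lemma Jobj_bound th : `|Jobj T P r d0 pi th| <= T.+1%:R * Rmax.
Proof.
rewrite Jobj_value; apply: norm_convex_comb_le => // s.
apply: norm_convex_comb_le => // [a|a]; first exact: ltW.
by apply: Qsteps_bound; rewrite ler01 lexx.
Qed.

Local Notation Qg th g t s a := (Qgamma T P r pi th g t s a).

Lemma Qgamma_bound th g t s a : 0 <= g <= 1 -> `|Qg th g t s a| <= T.+1%:R * Rmax.
Proof.
move=> g01; apply: le_trans (Qsteps_bound th (T - t).+1 s a g01) _.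
by rewrite ler_wpM2r // ler_nat ltnS leq_subr.
Qed.

Lemma Qgamma_discount_gap th g t s a : 0 <= g <= 1 ->
  `|Qg th 1 t s a - Qg th g t s a| <= T.+1%:R ^+ 2 * Rmax * (1 - g).
Proof.
move=> g01; have /andP[_ g1] := g01.
apply: le_trans (Qsteps_discount_gap th (T - t).+1 s a g01) _.
rewrite ler_wpM2r ?subr_ge0 // ler_wpM2r // lerXn2r ?nnegrE //.
by rewrite ler_nat ltnS leq_subr.
Qed.

Hypothesis pi_differentiable : forall s a th, differentiable (fun th' => pi th' s a) th.

Fixpoint dvalue th v k s : R :=
  if k is k'.+1 then
    \sum_(a : A) ('D_v (fun th' => pi th' s a) th * Q k th 1 s a
                   + pi th s a * \sum_(s' : S) P s a s' * dvalue th v k' s')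
  else 0.

Lemma is_derive_value th v k s :
  is_derive th v (fun th' => value k th' s) (dvalue th v k s).
Proof.
elim: k s => [|k IH] s.
  by rewrite (_ : (fun _ => _) = cst 0); [exact: is_derive_cst | apply/funext => ?; exact: value0].
apply: is_derive_eq.
  apply: is_derive_sum_fin => a; apply: is_derive_mul.
    exact/derivableP/diff_derivable.
  (* instance resolution derives the summands, using [IH] *)
  exact: is_derive_sum_fin.
apply: eq_bigr => a _ /=; congr (_ + _ * _); apply: eq_bigr => s' _.
by rewrite add0r scale1r.
Qed.

Lemma Qsteps1 th g s a : Q 1 th g s a = mean_reward s a.
Proof.
apply: eq_bigr => s' _.
by rewrite big1 ?mulr0 ?addr0 // => a' _; rewrite mulr0.
Qed.

Lemma derive_Jobj th v : 'D_v (Jobj T P r d0 pi) th =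
  \sum_(t < T) \sum_(s : S) \sum_(a : A)
    mu th t s * 'D_v (fun th' => pi th' s a) th * Qg th 1 t s a.
Proof.
rewrite (_ : Jobj T P r d0 pi = fun th' => \sum_(s : S) d0 s * value T.+1 th' s);
  last by apply/funext => th'; rewrite Jobj_value.
have dJ := is_derive_sum_fin (fun s => is_derive_scale (d0 s) (is_derive_value th v T.+1 s)).
rewrite (@derive_val _ _ _ _ _ _ _ dJ).
rewrite (state_dist_telescope
  (f := fun k s a => 'D_v (fun th' => pi th' s a) th * Q k.+1 th 1 s a)
  (X := fun k s => dvalue th v k s) (fun k s => erefl) T.+1 0).
rewrite [X in _ + X]big1 => [|s _]; last by rewrite mulr0.
rewrite addr0 big_ord_recr /= add0n sum_state_dist_T subnn.
rewrite [X in _ + X]big1 => [|a _]; last first.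
  by rewrite -[X in _ * X]/(Q 1 th 1 sterm a) Qsteps1 mean_reward_term mulr0.
rewrite addr0; apply: eq_bigr => t _; rewrite add0n subSS; apply: eq_bigr => s _.
by rewrite mulr_sumr; apply: eq_bigr => a _; rewrite mulrA.
Qed.

Lemma grad_Jobj th : grad (Jobj T P r d0 pi) th = gradhat T P r d0 pi th 1.
Proof.
apply/rowP => j; rewrite mxE derive_Jobj /gradhat summxE; apply: eq_bigr => t _.
rewrite summxE; apply: eq_bigr => s _; rewrite summxE; apply: eq_bigr => a _.
rewrite mxE grad_ln //; have := pi_gt0 th s a; rewrite lt0r => /andP[pi_neq0 _].
by field.
Qed.

Variable Lpi : R.
Hypotheses (score_bounded : forall th s a, `|grad (fun th' => ln (pi th' s a)) th| <= Lpi)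
  (Lpi_ge0 : 0 <= Lpi).

(* [gradhat T P r d0 pi th g] unfolds to [score_sum th (Qgamma T P r pi th g)]. *)
Definition score_sum th (X : nat -> S -> A -> R) : 'rV[R]_n :=
  \sum_(t < T) \sum_(s : S) \sum_(a : A)
     (mu th t s * pi th s a * X t s a) *: grad (fun th' => ln (pi th' s a)) th.

Lemma score_sumB th X Y :
  score_sum th X - score_sum th Y = score_sum th (fun t s a => X t s a - Y t s a).
Proof.
rewrite -sumrB; apply: eq_bigr => t _; rewrite -sumrB; apply: eq_bigr => s _.
by rewrite -sumrB; apply: eq_bigr => a _; rewrite -scalerBl mulrBr.
Qed.

Lemma norm_score_sum_le th X (c : R) : (forall t s a, `|X t s a| <= c) ->
  `|score_sum th X| <= T%:R * (c * Lpi).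
Proof.
move=> Xc; apply: le_trans (ler_norm_sum _ _ _) _.
rewrite mulr_natl -[T in _ *+ T]card_ord -sumr_const; apply: ler_sum => t _.
apply: le_trans (ler_norm_sum _ _ _) _.
rewrite -[leRHS]mul1r -(state_dist_sum1 th t) mulr_suml; apply: ler_sum => s _.
apply: le_trans (ler_norm_sum _ _ _) _.
rewrite -[leRHS]mul1r -(pi_sum1 th s) mulr_suml; apply: ler_sum => a _.
have mu0 := state_dist_ge0 th t s; have pi0 := ltW (pi_gt0 th s a).
rewrite normrZ !normrM (ger0_norm mu0) (ger0_norm pi0) -mulrA mulrCA -mulrA.
by rewrite -mulrA !ler_wpM2l // ler_pM.
Qed.

Lemma norm_gradhat_le th (g : R) : 0 <= g <= 1 ->
  `|gradhat T P r d0 pi th g| <= T%:R * (T.+1%:R * Rmax * Lpi).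
Proof. by move=> g01; apply: norm_score_sum_le => t s a; exact: Qgamma_bound. Qed.

Lemma gradhat_discount_gap th (g : R) : 0 <= g <= 1 ->
  `|gradhat T P r d0 pi th 1 - gradhat T P r d0 pi th g| <=
    T%:R * (T.+1%:R ^+ 2 * Rmax * (1 - g) * Lpi).
Proof.
move=> g01; rewrite [_ - _]score_sumB; apply: norm_score_sum_le => t s a.
exact: Qgamma_discount_gap.
Qed.

Lemma norm_grad_Jobj_le th :
  `|grad (Jobj T P r d0 pi) th| <= T%:R * (T.+1%:R * Rmax * Lpi).
Proof. by rewrite grad_Jobj norm_gradhat_le // ler01 lexx. Qed.

Lemma gradhat_bias_le th (g a c : R) : 0 <= g <= 1 -> 0 < c -> c * (1 - g) <= a ->
  `|gradhat T P r d0 pi th g - grad (Jobj T P r d0 pi) th| <=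
    T%:R * (T.+1%:R ^+ 2 * Rmax * Lpi) / c * a.
Proof.
move=> g01 c_gt0 ca; rewrite grad_Jobj distrC.
apply: le_trans (gradhat_discount_gap th g01) _.
by rewrite mulrAC -!mulrA !ler_wpM2l ?mulr_ge0 // mulrC ler_pdivlMr // mulrC.
Qed.

End EpisodicMDP.

Unset Implicit Arguments.

Theorem theorem2 (R : realType) (S A : finType) (n T : nat)
  (P : S -> A -> S -> R) (r : S -> A -> S -> R) (Rmax : R) (d0 : S -> R)
  (sterm : S) (pi : 'rV[R]_n -> S -> A -> R) (Lpi : R)
  (alpha gamma : nat -> R) (c : R) (theta : nat -> 'rV[R]_n) :
  (* finite episodic MDP *)
  (forall s a s', 0 <= P s a s') ->
  (forall s a, \sum_(s' : S) P s a s' = 1) ->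
  (forall s, 0 <= d0 s) -> \sum_(s : S) d0 s = 1 ->
  (forall s a s', `|r s a s'| <= Rmax) ->
  (* terminal absorbing state with reward 0, reached at time T *)
  (forall a, P sterm a sterm = 1) ->
  (forall a, r sterm a sterm = 0) ->
  (forall th, state_dist P d0 pi th T sterm = 1) ->
  (* parameterized policy *)
  (forall th s a, 0 < pi th s a) ->
  (forall th s, \sum_(a : A) pi th s a = 1) ->
  (forall s a th, differentiable (fun th' => pi th' s a) th) ->
  (forall th s a, `|grad (fun th' => ln (pi th' s a)) th| <= Lpi) ->
  (* J is continuously differentiable with Lipschitz gradient *)
  (forall th, differentiable (Jobj T P r d0 pi) th) ->
  continuous (grad (Jobj T P r d0 pi)) ->
  (exists L : R, forall th th',
      `|grad (Jobj T P r d0 pi) th - grad (Jobj T P r d0 pi) th'|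
        <= L * `|th - th'|) ->
  (* iteration and step-size conditions *)
  (forall i, theta i.+1 = theta i + alpha i *: gradhat T P r d0 pi (theta i) (gamma i)) ->
  (forall i, 0 < alpha i) ->
  (forall i, 0 <= gamma i <= 1) ->
  [series alpha i]_i @ \oo --> +oo ->
  cvg ([series alpha i ^+ 2]_i @ \oo) ->
  0 < c ->
  (forall i, c * (1 - gamma i) <= alpha i) ->
  (exists Jl : R, Jobj T P r d0 pi (theta i) @[i --> \oo] --> Jl) /\
  (grad (Jobj T P r d0 pi) (theta i) @[i --> \oo] --> (0 : 'rV[R]_n)) /\
  (forall th, cluster (theta @ \oo) th -> grad (Jobj T P r d0 pi) th = 0).
Proof.
move=> P_ge0 P_sum1 d0_ge0 d0_sum1 r_bounded P_term r_term state_dist_T pi_gt0 pi_sum1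
  pi_diff score_bounded J_diff grad_cont [L grad_lip] theta_step alpha_gt0 gamma01
  alpha_series alpha_sqr_series c_gt0 alpha_ge.
(* The lemmas above want nonnegative constants; absolute values are still bounds. *)
have r_bounded' s a s' : `|r s a s'| <= `|Rmax| := le_trans (r_bounded s a s') (ler_norm _).
have score_bounded' th s a : `|grad (fun th' => ln (pi th' s a)) th| <= `|Lpi|.
  exact: le_trans (score_bounded th s a) (ler_norm _).
have grad_lip' th th' : `|grad (Jobj T P r d0 pi) th - grad (Jobj T P r d0 pi) th'|
    <= `|L| * `|th - th'|.
  by apply: le_trans (grad_lip th th') _; rewrite ler_wpM2r ?ler_norm.
have J_bounded := Jobj_bound P_ge0 P_sum1 d0_ge0 d0_sum1 pi_gt0 pi_sum1
  P_term r_term state_dist_T r_bounded'.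
have grad_bounded := norm_grad_Jobj_le P_ge0 P_sum1 d0_ge0 d0_sum1 pi_gt0 pi_sum1
  P_term r_term state_dist_T r_bounded' (normr_ge0 _) pi_diff score_bounded'.
have step_bounded i := norm_gradhat_le T P_ge0 P_sum1 d0_ge0 d0_sum1 pi_gt0 pi_sum1
  r_bounded' (normr_ge0 _) score_bounded' (theta i) (gamma01 i).
have step_bias i := gradhat_bias_le P_ge0 P_sum1 d0_ge0 d0_sum1 pi_gt0 pi_sum1
  P_term r_term state_dist_T r_bounded' (normr_ge0 _) pi_diff score_bounded'
  (normr_ge0 _) (theta i) (gamma01 i) c_gt0 (alpha_ge i).
have grad_cvg0 := cvg_grad0 J_diff (normr_ge0 L) grad_lip' J_bounded grad_bounded
  step_bounded step_bias theta_step alpha_gt0 alpha_series alpha_sqr_series.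
split.
  exists (limn (fun i => Jobj T P r d0 pi (theta i))).
  exact: cvgn_objective J_diff (normr_ge0 L) grad_lip' J_bounded grad_bounded
    step_bounded step_bias theta_step alpha_gt0 alpha_sqr_series.
split => // th th_cluster.
have rV_hausdorff : hausdorff_space 'rV[R]_n by exact: norm_hausdorff.
apply: (cluster_cvg_eq rV_hausdorff grad_cvg0).
exact (cluster_map_continuous (grad_cont th) th_cluster).
Qed.
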